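(* Let $n\geq2$, let $\xi^1,\dots,\xi^{n-1}\in\mathbb{Q}^3\setminus\{0\}$ and $\xi^n\in\mathbb{Q}^3$. Then there exist points $x^1,\dots,x^n\in\mathbb{R}^3$ such that: if $\xi^n\neq0$, then $\Pi(x^i+\mathbb{R}\xi^i)\cap\Pi(x^j+\mathbb{R}\xi^j)=\emptyset$ for all $i\neq j$ in $\{1,\dots,n\}$; and if $\xi^n=0$, then $\Pi(x^i+\mathbb{R}\xi^i)\cap\Pi(x^j+\mathbb{R}\xi^j)=\emptyset$ for all $i\neq j$ in $\{1,\dots,n-1\}$ and $0_{Y_3}\notin\Pi(x^i+\mathbb{R}\xi^i)$ for all $i\in\{1,\dots,n-1\}$.
   Context: $Y_3=\mathbb{R}^3/\mathbb{Z}^3$, $\Pi:\mathbb{R}^3\to Y_3$ is the canonical surjection, and $0_{Y_3}=\Pi(0)$. *)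

From Stdlib Require Import Reals QArith Qreals.
Open Scope R_scope.

Record R3 := mkR3 { r1 : R; r2 : R; r3 : R }.
Record Q3 := mkQ3 { q1 : Q; q2 : Q; q3 : Q }.

Definition Q3zero (v : Q3) : Prop :=
  Qeq (q1 v) 0%Q /\ Qeq (q2 v) 0%Q /\ Qeq (q3 v) 0%Q.

Definition is_int (r : R) : Prop := exists k : Z, r = IZR k.

(* Pi a = Pi b in Y_3 = R^3/Z^3  iff  a - b in Z^3. *)
Definition torus_eq (a b : R3) : Prop :=
  is_int (r1 a - r1 b) /\ is_int (r2 a - r2 b) /\ is_int (r3 a - r3 b).

Definition line_pt (x : R3) (xi : Q3) (s : R) : R3 :=
  mkR3 (r1 x + s * Q2R (q1 xi)) (r2 x + s * Q2R (q2 xi)) (r3 x + s * Q2R (q3 xi)).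

Definition in_proj_line (x : R3) (xi : Q3) (y : R3) : Prop :=
  exists s : R, torus_eq (line_pt x xi s) y.

Definition proj_lines_disjoint (x : R3) (xi : Q3) (x' : R3) (xi' : Q3) : Prop :=
  ~ exists y : R3, in_proj_line x xi y /\ in_proj_line x' xi' y.

Definition origin3 : R3 := mkR3 0 0 0.

From Stdlib Require Import Reals QArith Qreals ZArith Lia.
Open Scope R_scope.

(* Take the base points on one rational line through 0: x^i = u_i / N * (1, M, M^2) with
   u_i = n - i pairwise distinct in {0, ..., n - 1}, so that x^n = 0.  If the projections
   of x^i + R xi^i and x^j + R xi^j meet, then c . (x^i - x^j) is an integer for every
   integer vector c orthogonal to xi^i and xi^j.  Such a c != 0 exists with entries bounded
   by some L depending only on the xi's (a cross product of the cleared-denominator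
   directions, or a vector orthogonal to one of them when they are parallel).  For
   M = 2L + 1 the integer w = c . (1, M, M^2) is nonzero (base-M digits) and |w| <= K, so
   c . (x^i - x^j) = (u_i - u_j) w / N is not an integer once N = nK + 1.  When xi^n = 0
   the n-th projected line is {0_{Y_3}}, so avoiding 0 is the case j = n. *)

Record Z3 := mkZ3 { z1 : Z; z2 : Z; z3 : Z }.

Definition Z3zero (c : Z3) : Prop := (z1 c = 0 /\ z2 c = 0 /\ z3 c = 0)%Z.

Definition zdot (c v : Z3) : Z := (z1 c * z1 v + z2 c * z2 v + z3 c * z3 v)%Z.

Definition zcross (a b : Z3) : Z3 :=
  mkZ3 (z2 a * z3 b - z3 a * z2 b) (z3 a * z1 b - z1 a * z3 b) (z1 a * z2 b - z2 a * z1 b).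

Definition zbounded (B : Z) (c : Z3) : Prop :=
  (Z.abs (z1 c) <= B /\ Z.abs (z2 c) <= B /\ Z.abs (z3 c) <= B)%Z.

Section IntegerVectors.
Local Open Scope Z_scope.

Lemma zdot_zcross_l (a b : Z3) : zdot (zcross a b) a = 0.
Proof. unfold zdot, zcross; simpl; ring. Qed.

Lemma zdot_zcross_r (a b : Z3) : zdot (zcross a b) b = 0.
Proof. unfold zdot, zcross; simpl; ring. Qed.

Lemma abs_sub_mul_le (B x y z t : Z) :
  Z.abs x <= B -> Z.abs y <= B -> Z.abs z <= B -> Z.abs t <= B ->
  Z.abs (x * y - z * t) <= 2 * B * B.
Proof.
  intros Hx Hy Hz Ht.
  assert (Hxy : Z.abs (x * y) <= B * B)
    by (rewrite Z.abs_mul; apply Z.mul_le_mono_nonneg; lia).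
  assert (Hzt : Z.abs (z * t) <= B * B)
    by (rewrite Z.abs_mul; apply Z.mul_le_mono_nonneg; lia).
  lia.
Qed.

Lemma zcross_bounded (B : Z) (a b : Z3) :
  zbounded B a -> zbounded B b -> zbounded (2 * B * B) (zcross a b).
Proof.
  intros (Ha1 & Ha2 & Ha3) (Hb1 & Hb2 & Hb3).
  unfold zbounded, zcross; simpl.
  repeat split; apply abs_sub_mul_le; assumption.
Qed.

Lemma exists_common_orth_l (B : Z) (a b : Z3) :
  zbounded B a -> zbounded B b -> ~ Z3zero a ->
  exists c, ~ Z3zero c /\ zdot c a = 0 /\ zdot c b = 0 /\ zbounded (2 * B * B + B) c.
Proof.
  intros Ha Hb Ha0.
  assert (HB : 0 <= B) by (destruct Ha; lia).
  assert (HBB : 0 <= B * B) by nia.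
  destruct (zcross_bounded B a b Ha Hb) as (Hx1 & Hx2 & Hx3).
  assert (Hpar : Z3zero (zcross a b) \/ ~ Z3zero (zcross a b)) by (unfold Z3zero; lia).
  destruct Hpar as [Hpar | Hpar].
  - (* Each [a x e_k] is orthogonal to [b] too: [(a x e_k) . b] is a coordinate of [a x b]. *)
    destruct a as [a1 a2 a3], b as [b1 b2 b3].
    unfold Z3zero, zcross, zdot, zbounded in *; cbn [z1 z2 z3] in *.
    destruct (Z.eq_dec a1 0); [destruct (Z.eq_dec a2 0)|].
    + exists (mkZ3 0 (- a3) a2); cbn [z1 z2 z3].
      repeat split; [lia | ring | lia | lia | lia | lia].
    + exists (mkZ3 (- a2) a1 0); cbn [z1 z2 z3].
      repeat split; [lia | ring | lia | lia | lia | lia].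
    + exists (mkZ3 a3 0 (- a1)); cbn [z1 z2 z3].
      repeat split; [lia | ring | lia | lia | lia | lia].
  - exists (zcross a b).
    repeat split; auto using zdot_zcross_l, zdot_zcross_r; lia.
Qed.

Lemma exists_common_orth (B : Z) (a b : Z3) :
  zbounded B a -> zbounded B b -> ~ Z3zero a \/ ~ Z3zero b ->
  exists c, ~ Z3zero c /\ zdot c a = 0 /\ zdot c b = 0 /\ zbounded (2 * B * B + B) c.
Proof.
  intros Ha Hb [Ha0 | Hb0].
  - exact (exists_common_orth_l B a b Ha Hb Ha0).
  - destruct (exists_common_orth_l B b a Hb Ha Hb0) as (c & ? & ? & ? & ?).
    exists c; tauto.
Qed.

Definition powers (M : Z) : Z3 := mkZ3 1 M (M * M).

Lemma zdot_powers_neq0 (L M : Z) (c : Z3) :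
  2 * L < M -> zbounded L c -> ~ Z3zero c -> zdot c (powers M) <> 0.
Proof.
  destruct c as [c1 c2 c3]; unfold zbounded, Z3zero, zdot, powers; cbn [z1 z2 z3].
  intros HM (H1 & H2 & H3) Hc E.
  destruct (Z.eq_dec c3 0) as [H3z | H3z]; [destruct (Z.eq_dec c2 0) as [H2z | H2z] |].
  - lia.
  - nia.
  - nia.
Qed.

Lemma zdot_powers_bound (L M : Z) (c : Z3) :
  0 <= M -> zbounded L c -> Z.abs (zdot c (powers M)) <= L * (1 + M + M * M).
Proof.
  destruct c as [c1 c2 c3]; unfold zbounded, zdot, powers; cbn [z1 z2 z3].
  intros HM (H1 & H2 & H3).
  nia.
Qed.

End IntegerVectors.

Definition R3_of_Q3 (v : Q3) : R3 := mkR3 (Q2R (q1 v)) (Q2R (q2 v)) (Q2R (q3 v)).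

Definition rdot (c : Z3) (x : R3) : R :=
  IZR (z1 c) * r1 x + IZR (z2 c) * r2 x + IZR (z3 c) * r3 x.

Definition Qden_Z (q : Q) : Z := Zpos (Qden q).

Definition Q3den (v : Q3) : Z := (Qden_Z (q1 v) * Qden_Z (q2 v) * Qden_Z (q3 v))%Z.

Definition Q3num (v : Q3) : Z3 :=
  mkZ3 (Qnum (q1 v) * Qden_Z (q2 v) * Qden_Z (q3 v))
       (Qnum (q2 v) * Qden_Z (q1 v) * Qden_Z (q3 v))
       (Qnum (q3 v) * Qden_Z (q1 v) * Qden_Z (q2 v)).

Lemma rdot_R3_of_Q3 (c : Z3) (v : Q3) :
  rdot c (R3_of_Q3 v) = IZR (zdot c (Q3num v)) / IZR (Q3den v).
Proof.
  unfold rdot, R3_of_Q3, zdot, Q3num, Q3den, Qden_Z, Q2R; cbn [r1 r2 r3 z1 z2 z3].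
  rewrite !plus_IZR, !mult_IZR.
  field; repeat split; apply not_0_IZR; lia.
Qed.

Lemma Q3num_nonzero (v : Q3) : ~ Q3zero v -> ~ Z3zero (Q3num v).
Proof.
  unfold Q3zero, Z3zero, Q3num, Qden_Z, Qeq; cbn [z1 z2 z3].
  intros Hv (E1 & E2 & E3); apply Hv; cbn [Qnum Qden]; nia.
Qed.

Lemma rdot_Q3_orth (c : Z3) (v : Q3) : zdot c (Q3num v) = 0%Z -> rdot c (R3_of_Q3 v) = 0.
Proof. intros E; rewrite rdot_R3_of_Q3, E; unfold Rdiv; ring. Qed.

Lemma is_int_minus (a b : R) : is_int a -> is_int b -> is_int (a - b).
Proof. intros [k ->] [l ->]; exists (k - l)%Z; now rewrite minus_IZR. Qed.

Lemma rdot_torus_eq (c : Z3) (a b : R3) : torus_eq a b -> is_int (rdot c a - rdot c b).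
Proof.
  intros ([k1 E1] & [k2 E2] & [k3 E3]).
  exists (zdot c (mkZ3 k1 k2 k3)).
  unfold zdot, rdot; cbn [z1 z2 z3]; rewrite !plus_IZR, !mult_IZR, <- E1, <- E2, <- E3.
  ring.
Qed.

Lemma rdot_line_pt (c : Z3) (x : R3) (xi : Q3) (s : R) :
  rdot c (line_pt x xi s) = rdot c x + s * rdot c (R3_of_Q3 xi).
Proof. unfold rdot, line_pt, R3_of_Q3; cbn [r1 r2 r3]; ring. Qed.

(* An integer covector [c] annihilating both directions descends to a map [Y_3 -> R/Z]
   that is constant on each projected line. *)
Lemma proj_lines_meet_is_int (c : Z3) (x : R3) (xi : Q3) (x' : R3) (xi' : Q3) (y : R3) :
  rdot c (R3_of_Q3 xi) = 0 -> rdot c (R3_of_Q3 xi') = 0 ->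
  in_proj_line x xi y -> in_proj_line x' xi' y -> is_int (rdot c x - rdot c x').
Proof.
  intros Hxi Hxi' [s Hs] [t Ht].
  apply (rdot_torus_eq c) in Hs, Ht.
  rewrite rdot_line_pt, Hxi in Hs; rewrite rdot_line_pt, Hxi' in Ht.
  replace (rdot c x - rdot c x')
    with ((rdot c x + s * 0 - rdot c y) - (rdot c x' + t * 0 - rdot c y)) by ring.
  now apply is_int_minus.
Qed.

Lemma not_is_int_IZR_div (a N : Z) : (0 < Z.abs a < N)%Z -> ~ is_int (IZR a / IZR N).
Proof.
  intros Ha [k Ek].
  assert (HN : IZR N <> 0) by (apply not_0_IZR; lia).
  assert (Ea : a = (k * N)%Z).
  { apply eq_IZR; rewrite mult_IZR, <- Ek; field; exact HN. }
  subst a; rewrite Z.abs_mul, (Z.abs_eq N) in Ha by lia.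
  assert (Hk : (1 <= Z.abs k)%Z) by (destruct (Z.eq_dec k 0); subst; lia).
  nia.
Qed.

Section Construction.

Variables (xi : nat -> Q3) (n : nat).

Fixpoint dir_bound (m : nat) : Z :=
  match m with
  | O => 0
  | S m => dir_bound m + Z.abs (z1 (Q3num (xi m))) + Z.abs (z2 (Q3num (xi m)))
           + Z.abs (z3 (Q3num (xi m)))
  end.

Lemma dir_bound_nonneg (m : nat) : (0 <= dir_bound m)%Z.
Proof. induction m; cbn [dir_bound]; lia. Qed.

Lemma zbounded_dir_bound (m i : nat) : (i < m)%nat -> zbounded (dir_bound m) (Q3num (xi i)).
Proof.
  induction m as [|m IH]; intros Hi; [lia|].
  pose proof (dir_bound_nonneg m).
  unfold zbounded in *; cbn [dir_bound].
  destruct (Nat.eq_dec i m) as [->|Him]; [lia|].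
  destruct (IH ltac:(lia)); lia.
Qed.

Let L : Z := (2 * dir_bound n * dir_bound n + dir_bound n)%Z.
Let M : Z := (2 * L + 1)%Z.
Let K : Z := (L * (1 + M + M * M))%Z.
Let N : Z := (Z.of_nat n * K + 1)%Z.

Definition base_pt (i : nat) : R3 :=
  let u := IZR (Z.of_nat (n - 1 - i)) / IZR N in
  mkR3 u (u * IZR M) (u * IZR (M * M)).

Lemma N_pos : (0 < N)%Z.
Proof.
  assert (0 <= L)%Z by (pose proof (dir_bound_nonneg n); unfold L; nia).
  assert (0 <= K)%Z by (unfold K, M; nia).
  unfold N; nia.
Qed.

Lemma rdot_base_pt_sub (c : Z3) (i j : nat) :
  rdot c (base_pt i) - rdot c (base_pt j)
  = IZR ((Z.of_nat (n - 1 - i) - Z.of_nat (n - 1 - j)) * zdot c (powers M)) / IZR N.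
Proof.
  assert (HN : IZR N <> 0) by (apply not_0_IZR; pose proof N_pos; lia).
  unfold rdot, base_pt, zdot, powers; cbn [r1 r2 r3 z1 z2 z3].
  rewrite !mult_IZR, !plus_IZR, !mult_IZR, minus_IZR.
  field; exact HN.
Qed.

Lemma base_pts_disjoint (i j : nat) :
  (i < n)%nat -> (j < n)%nat -> i <> j -> ~ Q3zero (xi i) \/ ~ Q3zero (xi j) ->
  proj_lines_disjoint (base_pt i) (xi i) (base_pt j) (xi j).
Proof.
  intros Hi Hj Hij Hnz [y [Hyi Hyj]].
  destruct (exists_common_orth (dir_bound n) (Q3num (xi i)) (Q3num (xi j)))
    as (c & Hc0 & Hci & Hcj & Hc).
  { now apply zbounded_dir_bound. }
  { now apply zbounded_dir_bound. }
  { destruct Hnz; [left | right]; now apply Q3num_nonzero. }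
  fold L in Hc.
  assert (HL : (0 <= L)%Z) by (destruct Hc; lia).
  assert (Hw0 : zdot c (powers M) <> 0%Z)
    by (apply (zdot_powers_neq0 L); unfold M; auto; lia).
  assert (HwK : (Z.abs (zdot c (powers M)) <= K)%Z)
    by (apply zdot_powers_bound; unfold M; auto; lia).
  apply (not_is_int_IZR_div
           ((Z.of_nat (n - 1 - i) - Z.of_nat (n - 1 - j)) * zdot c (powers M)) N).
  - rewrite Z.abs_mul; unfold N; nia.
  - rewrite <- rdot_base_pt_sub.
    apply (proj_lines_meet_is_int c _ (xi i) _ (xi j) y); auto using rdot_Q3_orth.
Qed.

Lemma base_pt_last : base_pt (n - 1) = origin3.
Proof.
  unfold base_pt, origin3; rewrite Nat.sub_diag; cbn [Z.of_nat].
  unfold Rdiv; f_equal; ring.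
Qed.

End Construction.

Theorem lemma4p1 (n : nat) (xi : nat -> Q3) :
  (2 <= n)%nat ->
  (forall i : nat, (i < n - 1)%nat -> ~ Q3zero (xi i)) ->
  exists x : nat -> R3,
    (~ Q3zero (xi (n - 1)%nat) ->
       forall i j : nat, (i < n)%nat -> (j < n)%nat -> i <> j ->
         proj_lines_disjoint (x i) (xi i) (x j) (xi j)) /\
    (Q3zero (xi (n - 1)%nat) ->
       (forall i j : nat, (i < n - 1)%nat -> (j < n - 1)%nat -> i <> j ->
          proj_lines_disjoint (x i) (xi i) (x j) (xi j)) /\
       (forall i : nat, (i < n - 1)%nat -> ~ in_proj_line (x i) (xi i) origin3)).
Proof.
  intros Hn Hnz.
  exists (base_pt xi n); split.
  - intros Hlast i j Hi Hj Hij.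
    apply base_pts_disjoint; auto; left.
    destruct (Nat.eq_dec i (n - 1)) as [->|]; [exact Hlast | apply Hnz; lia].
  - intros Hlast; split.
    + intros i j Hi Hj Hij.
      apply base_pts_disjoint; try lia; left; auto.
    + intros i Hi H0.
      apply (base_pts_disjoint xi n i (n - 1)); try lia; [left; auto|].
      exists origin3; split; [exact H0|].
      exists 0; rewrite base_pt_last.
      unfold torus_eq, line_pt, origin3; cbn [r1 r2 r3].
      repeat split; exists 0%Z; ring.
Qed.
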